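(* Consider the iterates of the AdaSMSAG method described in the context, and let $x^*$ be an optimal solution of $\min_{x\in X}\psi(x)$. Suppose that, for a given $k\ge1$, $\alpha_k\beta_k-\theta_k\le 0$ and $\beta_k-L_k>0$, where $L_k:=L_f+L/\mu_k$. Then $$\Gamma_k\le\alpha_k\theta_k\left(D_{k-1}^2-D_k^2\right)+\frac{\|\delta_k\|^2}{2(\beta_k-L_k)}+\alpha_k\langle\delta_k,\;x^*-z_{k-1}\rangle.$$
   Context: Setting: $X\subseteq\mathbb{R}^n$ is a nonempty closed convex set; $\psi=f+h$ where $f(x)=E[F(x,\xi)]$, $h(x)=E[H(x,\xi)]$, $\xi$ a random vector supported on $\Xi\subseteq\mathbb{R}^d$, $F(\cdot,\xi)$ convex with Lipschitz continuous gradient and $H(\cdot,\xi)$ convex (possibly nonsmooth) for every $\xi$; $f$ is convex and differentiable with $\nabla f$ Lipschitz on $X$ with constant $L_f$. $\{\tilde h_\mu\}_{\mu\in(0,\bar\mu]}$ is a smoothing function of $h$ on $X$: each $\tilde h_\mu$ is continuously differentiable and convex on $X$; $\tilde h_\mu(z)\to h(x)$ as $z\to x,\mu\downarrow0$; $|\tilde h_{\mu_2}(x)-\tilde h_{\mu_1}(x)|\le\kappa|\mu_1-\mu_2|$ for all $x\in X$, $\mu_1,\mu_2\in(0,\bar\mu]$ ($\kappa>0$); and $\nabla\tilde h_\mu$ is $L/\mu$-Lipschitz on $X$ ($L>0$). Set $\tilde\psi_\mu:=f+\tilde h_\mu$. A stochastic first-order oracle returns, for input $x\in X$, $\mu>0$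 and a sample $\xi$, a vector $\nabla\tilde\Psi_\mu(x,\xi)$. AdaSMSAG method: inputs $N\ge1$, batch sizes $m_k\ge 1$, $\alpha_k\in(0,1)$, $c>0$, $\mu_0\in(0,\bar\mu]$, $\beta_k>0$, $\theta_k>0$, $z_0=y_0\in X$. For $k=1,\dots,N$: $x_k=\alpha_k z_{k-1}+(1-\alpha_k)y_{k-1}$; $\mu_k=\frac{c\mu_0}{k+c}$; draw samples $\xi_{k,1},\dots,\xi_{k,m_k}$ and set $G_k:=\frac1{m_k}\sum_{i=1}^{m_k}\nabla\tilde\Psi_{\mu_k}(x_k,\xi_{k,i})$; $y_k=\arg\min_{y\in X}\{\langle G_k,y-x_k\rangle+\frac{\beta_k}{2}\|y-x_k\|^2\}$; $z_k=\arg\min_{x\in X}\{\langle G_k,x-x_k\rangle+\frac{\theta_k}{2}\|x-z_{k-1}\|^2\}$. Notation: $\delta_k:=G_k-\nabla\tilde\psi_{\mu_k}(x_k)$; $D_k^2:=\frac{\|x^*-z_k\|^2}{2}$ for $k\ge0$; $\Delta_{\mu_k}:=\tilde\psi_{\mu_k}(y_k)-\tilde\psi_{\mu_k}(x^* )$ for $k\ge0$; $\Gamma_k:=\Delta_{\mu_k}-(1-\alpha_k)\Delta_{\mu_{k-1}}-2\kappa(1-\alpha_k)(\mu_{k-1}-\mu_k)$. *)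

From HB Require Import structures.
From mathcomp Require Import all_boot all_order all_algebra.
From mathcomp Require Import all_classical all_reals all_analysis.
Set Implicit Arguments. Unset Strict Implicit. Unset Printing Implicit Defensive.
Import Order.TTheory GRing.Theory Num.Theory.
Import numFieldNormedType.Exports.
Local Open Scope classical_set_scope.
Local Open Scope ring_scope.

Section Defs.
Variables (R : realType) (n : nat).
Notation vec := 'rV[R]_n.

Definition dot (u v : vec) : R := \sum_(i < n) u ord0 i * v ord0 i.
Definition enorm (u : vec) : R := Num.sqrt (dot u u).

Definition convex_set_E (X : set vec) : Prop :=
  forall x y t, X x -> X y -> 0 <= t <= 1 -> X (t *: x + (1 - t) *: y).

Definition convex_fun_on (X : set vec) (f : vec -> R) : Prop :=
  forall x y t, X x -> X y -> 0 <= t <= 1 ->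
    f (t *: x + (1 - t) *: y) <= t * f x + (1 - t) * f y.

Definition is_gradient_at (f : vec -> R) (g : vec) (x : vec) : Prop :=
  forall eps : R, 0 < eps -> exists delta : R, 0 < delta /\
    forall y : vec, enorm (y - x) < delta ->
      `|f y - f x - dot g (y - x)| <= eps * enorm (y - x).

Definition lipschitz_on_E (X : set vec) (g : vec -> vec) (Lc : R) : Prop :=
  forall x y, X x -> X y -> enorm (g x - g y) <= Lc * enorm (x - y).

Definition contin_on (X : set vec) (g : vec -> vec) : Prop :=
  forall x, X x -> forall eps : R, 0 < eps -> exists delta : R, 0 < delta /\
    forall y, X y -> enorm (y - x) < delta -> enorm (g y - g x) < eps.

Definition smoothing_function (X : set vec) (h : vec -> R)
    (ht : R -> vec -> R) (ght : R -> vec -> vec) (mubar kappa L : R) : Prop :=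
  (forall mu, 0 < mu <= mubar ->
         (forall x, X x -> is_gradient_at (ht mu) (ght mu x) x)
         /\ contin_on X (ght mu) /\ convex_fun_on X (ht mu)) /\
      (forall x, X x -> forall eps : R, 0 < eps -> exists delta : R, 0 < delta /\
         forall z mu, X z -> enorm (z - x) < delta -> 0 < mu <= mubar -> mu < delta ->
           `|ht mu z - h x| < eps) /\
      (forall x mu1 mu2, X x -> 0 < mu1 <= mubar -> 0 < mu2 <= mubar ->
         `|ht mu2 x - ht mu1 x| <= kappa * `|mu1 - mu2|) /\
      0 < kappa /\ 0 < L /\
      (forall mu, 0 < mu <= mubar -> lipschitz_on_E X (ght mu) (L / mu)).

Definition is_argmin (X : set vec) (phi : vec -> R) (y : vec) : Prop :=
  X y /\ forall w, X w -> phi y <= phi w.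

End Defs.

From HB Require Import structures.
From mathcomp Require Import all_boot all_order all_algebra.
From mathcomp Require Import all_classical all_reals all_analysis.
From mathcomp Require Import ring lra.
Set Implicit Arguments. Unset Strict Implicit. Unset Printing Implicit Defensive.
Import Order.TTheory GRing.Theory Num.Theory.
Import numFieldNormedType.Exports.
Local Open Scope classical_set_scope.
Local Open Scope ring_scope.

(* With g := G_k and psi := f + h_{mu_k}, a convex function whose gradient is
   L_k-Lipschitz, the step is the classical estimate for an accelerated gradient
   method driven by the inexact gradient g = grad psi(x_k) + delta_k.  The descent
   lemma bounds psi(y_k) by the quadratic model at x_k, and Young's inequality
   trades the error term for |delta_k|^2 / (2 (beta_k - L_k)).  Since y_k
   minimises the model, it does at least as well as
   alpha_k z_k + (1 - alpha_k) y_{k-1}; as alpha_k beta_k <= theta_k, the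
   three-point property of the prox step defining z_k turns this into
   alpha_k theta_k (D_{k-1}^2 - D_k^2) plus a linear term, which convexity of psi
   at x_k = alpha_k z_{k-1} + (1 - alpha_k) y_{k-1} bounds by
   alpha_k psi(xstar) + (1 - alpha_k) psi(y_{k-1}).  Replacing mu_{k-1} by mu_k
   in Delta_{k-1} costs at most 2 kappa (mu_{k-1} - mu_k), the correction in
   Gamma_k.  The descent lemma is proved without integration, by summing the
   gradient inequality over a uniform grid on [x, y] and refining the grid. *)

Lemma linear_coef_ge0 (R : realFieldType) (A K : R) :
  (forall t, 0 < t <= 1 -> 0 <= t * A + t ^+ 2 * K) -> 0 <= A.
Proof.
move=> small_t; rewrite leNgt; apply/negP => A_lt0.
have K1 : 0 < 2 * (`|K| + 1) by have := normr_ge0 K; lra.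
pose t := Num.min 1 (- A / (2 * (`|K| + 1))).
have t_gt0 : 0 < t by rewrite lt_min ltr01 divr_gt0 // oppr_gt0.
have t_le1 : t <= 1 by rewrite ge_min lexx.
have : t <= - A / (2 * (`|K| + 1)) by rewrite ge_min lexx orbT.
rewrite ler_pdivlMr // => t_small.
have : 0 <= t * (A + t * K) by rewrite mulrDr mulrA -expr2 small_t // t_gt0.
rewrite pmulr_rge0 //.
have := ler_wpM2l (ltW t_gt0) (ler_norm K); have := mulr_ge0 (ltW t_gt0) (normr_ge0 K).
lra.
Qed.

Section InnerProduct.
Variables (R : realType) (n : nat).
Implicit Types (u v w : 'rV[R]_n) (a : R).

Lemma dotC u v : dot u v = dot v u.
Proof. by apply: eq_bigr => i _; rewrite mulrC. Qed.

Lemma dotDl u v w : dot (u + v) w = dot u w + dot v w.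
Proof. by rewrite /dot -big_split; apply: eq_bigr => i _; rewrite mxE mulrDl. Qed.

Lemma dotZl a u v : dot (a *: u) v = a * dot u v.
Proof. by rewrite /dot mulr_sumr; apply: eq_bigr => i _; rewrite mxE mulrA. Qed.

Lemma dotNl u v : dot (- u) v = - dot u v.
Proof. by rewrite -scaleN1r dotZl mulN1r. Qed.

Lemma dotBl u v w : dot (u - v) w = dot u w - dot v w.
Proof. by rewrite dotDl dotNl. Qed.

Lemma dotDr u v w : dot u (v + w) = dot u v + dot u w.
Proof. by rewrite dotC dotDl !(dotC u). Qed.

Lemma dotZr a u v : dot u (a *: v) = a * dot u v.
Proof. by rewrite dotC dotZl dotC. Qed.

Lemma dotvv_ge0 u : 0 <= dot u u.
Proof. by apply: sumr_ge0 => i _; rewrite -expr2 sqr_ge0. Qed.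

Lemma dotvv_eq0 u : dot u u = 0 -> u = 0.
Proof.
move=> /psumr_eq0P uu0; apply/rowP => j; rewrite mxE.
by apply/eqP; rewrite -sqrf_eq0 expr2 uu0 // => i _; rewrite -expr2 sqr_ge0.
Qed.

Lemma enorm_ge0 u : 0 <= enorm u.
Proof. exact: sqrtr_ge0. Qed.

Lemma sqr_enorm u : enorm u ^+ 2 = dot u u.
Proof. by rewrite sqr_sqrtr // dotvv_ge0. Qed.

Lemma enorm_eq0 u : enorm u = 0 -> u = 0.
Proof. by move=> u0; apply: dotvv_eq0; rewrite -sqr_enorm u0 expr0n. Qed.

Lemma sqr_enormZ a u : enorm (a *: u) ^+ 2 = a ^+ 2 * enorm u ^+ 2.
Proof. by rewrite !sqr_enorm dotZl dotZr mulrA -expr2. Qed.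

Lemma enormZ a u : 0 <= a -> enorm (a *: u) = a * enorm u.
Proof.
move=> a_ge0; apply: (@pexpIrn _ 2) => //; rewrite ?nnegrE ?mulr_ge0 ?enorm_ge0 //.
by rewrite sqr_enormZ exprMn.
Qed.

Lemma sqr_enormD u v : enorm (u + v) ^+ 2 = enorm u ^+ 2 + 2 * dot u v + enorm v ^+ 2.
Proof. by rewrite !sqr_enorm !dotDl !dotDr (dotC v u); ring. Qed.

Lemma dot_le_enorm u v : dot u v <= enorm u * enorm v.
Proof.
have [/enorm_eq0 ->|u_neq0] := eqVneq (enorm u) 0.
  by rewrite /dot big1 ?mulr_ge0 ?enorm_ge0 // => i _; rewrite mxE mul0r.
have [/enorm_eq0 ->|v_neq0] := eqVneq (enorm v) 0.
  by rewrite /dot big1 ?mulr_ge0 ?enorm_ge0 // => i _; rewrite mxE mulr0.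
have uv_gt0 : 0 < enorm u * enorm v.
  by rewrite mulr_gt0 // lt0r ?u_neq0 ?v_neq0 enorm_ge0.
(* [0 <= | |v| u - |u| v |^2 = 2 |u| |v| (|u| |v| - <u, v>)] *)
have := sqr_ge0 (enorm (enorm v *: u - enorm u *: v)).
rewrite sqr_enormD -scaleNr dotZl !dotZr !sqr_enormZ sqrrN.
rewrite (_ : _ + _ + _ = 2 * (enorm u * enorm v) * (enorm u * enorm v - dot u v)); last by ring.
by rewrite pmulr_rge0 ?subr_ge0 // (mulr_gt0 _ uv_gt0).
Qed.

Lemma ler_enormD u v : enorm (u + v) <= enorm u + enorm v.
Proof.
rewrite -(ler_pXn2r (_ : 0 < 2)%N) ?nnegrE ?addr_ge0 ?enorm_ge0 //.
by rewrite sqr_enormD sqrrD lerD2r lerD2l mulrC mulr_natr mulr2n lerD ?dot_le_enorm.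
Qed.

Lemma dot_young (c : R) u v : 0 < c ->
  - dot u v - c / 2 * enorm v ^+ 2 <= enorm u ^+ 2 / (2 * c).
Proof.
move=> c_gt0; rewrite -subr_ge0.
rewrite (_ : enorm u ^+ 2 / (2 * c) - _ = enorm (u + c *: v) ^+ 2 / (2 * c)).
  by apply: divr_ge0; [exact: sqr_ge0 | lra].
by rewrite sqr_enormD dotZr sqr_enormZ; field; rewrite gt_eqF.
Qed.

End InnerProduct.

Section SmoothConvex.
Variables (R : realType) (n : nat) (X : set 'rV[R]_n).
Hypothesis convX : convex_set_E X.

Lemma convex_set_segment x y t : X x -> X y -> 0 <= t <= 1 -> X (x + t *: (y - x)).
Proof.
move=> Xx Xy t01; have := convX Xy Xx t01.
by congr X; apply/rowP => i; rewrite !mxE; ring.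
Qed.

Lemma convex_funD (F G : 'rV[R]_n -> R) :
  convex_fun_on X F -> convex_fun_on X G -> convex_fun_on X (fun w => F w + G w).
Proof.
move=> convF convG x y t Xx Xy t01.
by have := convF x y t Xx Xy t01; have := convG x y t Xx Xy t01; lra.
Qed.

Lemma is_gradient_atD (F G : 'rV[R]_n -> R) gF gG x :
  is_gradient_at F gF x -> is_gradient_at G gG x ->
  is_gradient_at (fun w => F w + G w) (gF + gG) x.
Proof.
move=> dF dG e e_gt0; have e2_gt0 : 0 < e / 2 by lra.
have [rF [rF_gt0 nearF]] := dF _ e2_gt0; have [rG [rG_gt0 nearG]] := dG _ e2_gt0.
exists (Num.min rF rG); split => [|y]; first by rewrite lt_min rF_gt0.
rewrite lt_min => /andP[yF yG]; rewrite dotDl.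
rewrite (_ : _ - _ - _ = (F y - F x - dot gF (y - x)) + (G y - G x - dot gG (y - x))); last by ring.
apply: le_trans (ler_normD _ _) _.
have := nearF y yF; have := nearG y yG; lra.
Qed.

Lemma lipschitz_onD (gF gG : 'rV[R]_n -> 'rV[R]_n) LF LG :
  lipschitz_on_E X gF LF -> lipschitz_on_E X gG LG ->
  lipschitz_on_E X (fun w => gF w + gG w) (LF + LG).
Proof.
move=> lipF lipG x y Xx Xy; rewrite mulrDl.
apply: le_trans (lerD (lipF x y Xx Xy) (lipG x y Xx Xy)).
rewrite (_ : _ - _ = (gF x - gF y) + (gG x - gG y)) ?ler_enormD //.
by apply/rowP => i; rewrite !mxE; ring.
Qed.

Lemma argmin_prox_first_order (g a c y w : 'rV[R]_n) (b : R) :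
  is_argmin X (fun v => dot g (v - a) + b / 2 * enorm (v - c) ^+ 2) y -> X w ->
  0 <= dot g (w - y) + b * dot (y - c) (w - y).
Proof.
move=> [Xy y_min] Xw.
apply: (@linear_coef_ge0 _ _ (b / 2 * enorm (w - y) ^+ 2)) => t /andP[t_gt0 t_le1].
have := y_min _ (convex_set_segment Xy Xw (introT andP (conj (ltW t_gt0) t_le1))).
rewrite (addrAC y _ (- a)) (addrAC y _ (- c)) (dotDr g (y - a)) (sqr_enormD (y - c)).
by rewrite !dotZr sqr_enormZ; lra.
Qed.

Lemma argmin_prox_three_point (g a c y w : 'rV[R]_n) (b : R) :
  is_argmin X (fun v => dot g (v - a) + b / 2 * enorm (v - c) ^+ 2) y -> X w ->
  dot g (y - a) + b / 2 * enorm (y - c) ^+ 2 + b / 2 * enorm (w - y) ^+ 2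
    <= dot g (w - a) + b / 2 * enorm (w - c) ^+ 2.
Proof.
move=> y_opt Xw; have := argmin_prox_first_order y_opt Xw.
rewrite -(subrKA y w (- a)) -(subrKA y w (- c)) (dotDr g (w - y)) (sqr_enormD (w - y)).
by rewrite (dotC (w - y)); lra.
Qed.

Lemma accelerated_model_le (g x y z y1 z1 w : 'rV[R]_n) (a b th : R) :
  0 < a <= 1 -> a * b <= th -> X y1 -> X w -> x = a *: z1 + (1 - a) *: y1 ->
  is_argmin X (fun v => dot g (v - x) + b / 2 * enorm (v - x) ^+ 2) y ->
  is_argmin X (fun v => dot g (v - x) + th / 2 * enorm (v - z1) ^+ 2) z ->
  dot g (y - x) + b / 2 * enorm (y - x) ^+ 2
    <= a * dot g (w - z1) + a * th / 2 * (enorm (w - z1) ^+ 2 - enorm (w - z) ^+ 2).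
Proof.
move=> /andP[a_gt0 a_le1] ab_le Xy1 Xw x_def [_ y_min] z_opt.
have a01 : 0 <= a <= 1 by rewrite ltW.
(* compare [y] with [a z + (1 - a) y1 = x + a (z - z1)] *)
have := y_min _ (convX z_opt.1 Xy1 a01).
rewrite (_ : a *: z + (1 - a) *: y1 - x = a *: (z - z1)); last first.
  by rewrite x_def; apply/rowP => i; rewrite !mxE; ring.
rewrite dotZr sqr_enormZ => y_le.
have := argmin_prox_three_point z_opt Xw.
rewrite -(subrKA z1 z (- x)) -(subrKA z1 w (- x)) (dotDr g (z - z1)) (dotDr g (w - z1)).
move=> /(ler_wpM2l (ltW a_gt0)).
have := ler_wpM2r (sqr_ge0 (enorm (z - z1))) (ler_wpM2l (ltW a_gt0) ab_le).
lra.
Qed.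

Variables (F : 'rV[R]_n -> R) (gF : 'rV[R]_n -> 'rV[R]_n) (Lc : R).
Hypotheses (convF : convex_fun_on X F)
  (gradF : forall w, X w -> is_gradient_at F (gF w) w)
  (lipF : lipschitz_on_E X gF Lc) (Lc_ge0 : 0 <= Lc).

Lemma convex_gradient_le x w : X x -> X w -> F x + dot (gF x) (w - x) <= F w.
Proof.
move=> Xx Xw; set d := w - x; apply/ler_addgt0Pr => e e_gt0.
have K_gt0 : 0 < enorm d + 1 by have := enorm_ge0 d; lra.
have [r [r_gt0 near_x]] := gradF Xx (divr_gt0 e_gt0 K_gt0).
pose t := Num.min 1 (r / (2 * (enorm d + 1))).
have t_gt0 : 0 < t by rewrite lt_min ltr01 divr_gt0 ?mulr_gt0.
have t01 : 0 <= t <= 1 by rewrite ltW //= ge_min lexx.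
have : t <= r / (2 * (enorm d + 1)) by rewrite ge_min lexx orbT.
rewrite ler_pdivlMr ?mulr_gt0 // => t_small.
have t_d : t * enorm d < r by have := mulr_ge0 (ltW t_gt0) (enorm_ge0 d); lra.
have := near_x (x + t *: d).
rewrite addrAC subrr add0r enormZ ?dotZr => [/(_ t_d)|]; last exact: ltW.
rewrite ler_norml => /andP[lin _].
have := convF Xw Xx t01.
rewrite (_ : t *: w + (1 - t) *: x = x + t *: d); last by apply/rowP => i; rewrite !mxE; ring.
have : e / (enorm d + 1) * (t * enorm d) <= t * e.
  by rewrite mulrCA ler_pM2l // mulrAC ler_pdivrMr // ler_pM2l // lerDl.
move=> bound conv; rewrite -(ler_pM2l t_gt0); lra.
Qed.

Lemma gradient_slope_le x y t : X x -> X y -> 0 <= t <= 1 ->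
  dot (gF (x + t *: (y - x))) (y - x) <= dot (gF x) (y - x) + Lc * t * enorm (y - x) ^+ 2.
Proof.
move=> Xx Xy t01; set d := y - x; set p := x + t *: d.
have Xp : X p := convex_set_segment Xx Xy t01.
have lip : enorm (gF p - gF x) <= Lc * (t * enorm d).
  have -> : t * enorm d = enorm (p - x) by rewrite /p addrAC subrr add0r enormZ // (andP t01).1.
  exact: lipF.
have := dot_le_enorm (gF p - gF x) d; rewrite dotBl.
have := ler_wpM2r (enorm_ge0 d) lip; rewrite expr2; lra.
Qed.

Lemma descent_grid x y (M : nat) : X x -> X y ->
  F y <= F x + dot (gF x) (y - x) + Lc / 2 * enorm (y - x) ^+ 2 * (1 + M.+1%:R^-1).
Proof.
move=> Xx Xy; set d := y - x; set G := dot (gF x) d; set Q := enorm d ^+ 2.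
set s : R := M.+1%:R^-1; set p := fun j : nat => x + (j%:R * s) *: d.
have s_gt0 : 0 < s by rewrite invr_gt0.
have Ms : M.+1%:R * s = 1 by rewrite mulfV.
have grid j : (j <= M.+1)%N -> 0 <= j%:R * s <= 1.
  by move=> jM; rewrite mulr_ge0 ?(ltW s_gt0) //= -[leRHS]Ms ler_pM2r // ler_nat.
have step j : (j < M.+1)%N -> F (p j.+1) <= F (p j) + s * (G + Lc * (j.+1%:R * s) * Q).
  move=> jM; have Xpj := convex_set_segment Xx Xy (grid j (ltnW jM)).
  have Xpj1 := convex_set_segment Xx Xy (grid j.+1 jM).
  have := convex_gradient_le Xpj1 Xpj.
  rewrite (_ : p j - p j.+1 = (- s) *: d); last by apply/rowP => i; rewrite !mxE mulrS; ring.
  have := ler_wpM2l (ltW s_gt0) (gradient_slope_le Xx Xy (grid j.+1 jM)).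
  rewrite -/d -/G -/Q -/(p j.+1) -/(p j) dotZr; lra.
have partial j : (j <= M.+1)%N ->
    F (p j) <= F x + j%:R * s * G + Lc * Q * s ^+ 2 * (j%:R * j.+1%:R / 2).
  elim: j => [_|j IH jM]; first by rewrite /p !mul0r scale0r addr0 mulr0 !addr0.
  have := step j jM; have := IH (ltnW jM).
  rewrite [j.+2%:R]mulrSr [j.+1%:R]mulrSr; lra.
have := partial _ (leqnn _).
have -> : p M.+1 = y by rewrite /p Ms scale1r addrC subrK.
rewrite [M.+2%:R]mulrSr Ms mul1r.
suff -> : Lc * Q * s ^+ 2 * (M.+1%:R * (M.+1%:R + 1) / 2) = Lc / 2 * Q * (1 + s) by [].
by rewrite /s; field; rewrite -mulrS pnatr_eq0.
Qed.

Lemma descent x y : X x -> X y ->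
  F y <= F x + dot (gF x) (y - x) + Lc / 2 * enorm (y - x) ^+ 2.
Proof.
move=> Xx Xy; apply/ler_addgt0Pr => e e_gt0.
set B := Lc / 2 * enorm (y - x) ^+ 2.
have B_ge0 : 0 <= B by rewrite mulr_ge0 ?sqr_ge0 ?divr_ge0.
set M := Num.truncn (B / e).
have M_gt0 : 0 < M.+1%:R :> R by [].
have : B / e < M.+1%:R by exact: truncnS_gt.
rewrite ltr_pdivrMr // mulrC -ltr_pdivrMr // => Be.
apply: le_trans (descent_grid M Xx Xy) _.
by rewrite -/B mulrDr mulr1 addrA lerD2l ltW.
Qed.

Lemma accelerated_step_le (g x y z y1 z1 w : 'rV[R]_n) (a b th : R) :
  0 < a <= 1 -> a * b <= th -> Lc < b -> X y1 -> X z1 -> X w ->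
  x = a *: z1 + (1 - a) *: y1 ->
  is_argmin X (fun v => dot g (v - x) + b / 2 * enorm (v - x) ^+ 2) y ->
  is_argmin X (fun v => dot g (v - x) + th / 2 * enorm (v - z1) ^+ 2) z ->
  F y <= a * F w + (1 - a) * F y1
         + a * th * (enorm (w - z1) ^+ 2 / 2 - enorm (w - z) ^+ 2 / 2)
         + enorm (g - gF x) ^+ 2 / (2 * (b - Lc))
         + a * dot (g - gF x) (w - z1).
Proof.
move=> a01 ab_le Lc_lt_b Xy1 Xz1 Xw x_def y_opt z_opt.
have [a_gt0 a_le1] := andP a01.
have Xx : X x by rewrite x_def; apply: convX; rewrite // ltW.
set err := g - gF x.
have err_split u : dot g u = dot err u + dot (gF x) u by rewrite dotBl subrK.
have := descent Xx y_opt.1.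
have := dot_young err (y - x) (_ : 0 < b - Lc); rewrite ?subr_gt0 // => young.
have := accelerated_model_le a01 ab_le Xy1 Xw x_def y_opt z_opt.
have cvx : F x + a * dot (gF x) (w - z1) <= a * F w + (1 - a) * F y1.
  have -> : a * dot (gF x) (w - z1) = a * dot (gF x) (w - x) + (1 - a) * dot (gF x) (y1 - x).
    by rewrite -!dotZr -dotDr x_def; congr dot; apply/rowP => i; rewrite !mxE; ring.
  have := ler_wpM2l (ltW a_gt0) (convex_gradient_le Xx Xw).
  have := ler_wpM2l (_ : 0 <= 1 - a) (convex_gradient_le Xx Xy1); rewrite ?subr_ge0 // => ?.
  lra.
rewrite (err_split (y - x)) (err_split (w - z1)) (mulrDr a (dot err _)); lra.
Qed.

End SmoothConvex.

Section SmoothingParameter.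
Variables (R : realType) (c mu0 : R).
Hypotheses (c_gt0 : 0 < c) (mu0_gt0 : 0 < mu0).

Lemma smoothing_param_gt0 (j : nat) : 0 < c * mu0 / (j%:R + c).
Proof. by rewrite divr_gt0 ?mulr_gt0 // ltr_wpDl. Qed.

Lemma smoothing_param_le (j : nat) : c * mu0 / (j%:R + c) <= mu0.
Proof.
have j_ge0 : 0 <= j%:R :> R by [].
by rewrite ler_pdivrMr ?ltr_wpDl // mulrC ler_pM2l // lerDr.
Qed.

Lemma smoothing_param_nonincr (i j : nat) : (i <= j)%N ->
  c * mu0 / (j%:R + c) <= c * mu0 / (i%:R + c).
Proof.
move=> ij; rewrite ler_pM2l ?mulr_gt0 // lef_pV2 ?posrE ?ltr_wpDl //.
by rewrite lerD2r ler_nat.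
Qed.

End SmoothingParameter.

Lemma smoothing_drift_le (R : realType) (n : nat) (X : set 'rV[R]_n) h ht ght
    (mubar kappa L mu mu' : R) (u v : 'rV[R]_n) :
  smoothing_function X h ht ght mubar kappa L -> X u -> X v ->
  0 < mu' <= mu -> mu <= mubar ->
  ht mu' u - ht mu' v <= ht mu u - ht mu v + 2 * kappa * (mu - mu').
Proof.
move=> [_ [_ [gap _]]] Xu Xv /andP[mu'_gt0 mu'_le] mu_le.
have mu_in : 0 < mu <= mubar by rewrite mu_le (lt_le_trans mu'_gt0).
have mu'_in : 0 < mu' <= mubar by rewrite mu'_gt0 (le_trans mu'_le).
have := gap _ _ _ Xu mu_in mu'_in; have := gap _ _ _ Xv mu_in mu'_in.
have -> : `|mu - mu'| = mu - mu' by rewrite ger0_norm // subr_ge0.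
by rewrite !ler_norml; lra.
Qed.

Theorem lemma5 (R : realType) (n d : nat)
  (X : set 'rV[R]_n) (Xi : set 'rV[R]_d)
  (f h : 'rV[R]_n -> R) (gf : 'rV[R]_n -> 'rV[R]_n) (Lf : R)
  (ht : R -> 'rV[R]_n -> R) (ght : R -> 'rV[R]_n -> 'rV[R]_n)
  (mubar kappa L : R)
  (oracle : R -> 'rV[R]_n -> 'rV[R]_d -> 'rV[R]_n)
  (N : nat) (m : nat -> nat) (alpha beta theta : nat -> R) (c mu0 : R)
  (xi : nat -> nat -> 'rV[R]_d)
  (x y z : nat -> 'rV[R]_n) (xstar : 'rV[R]_n) (k : nat) :
  (* standing assumptions *)
  closed X -> convex_set_E X -> (exists x0, X x0) ->
  convex_fun_on X f -> (forall w, X w -> is_gradient_at f (gf w) w) ->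
  lipschitz_on_E X gf Lf -> 0 <= Lf ->
  convex_fun_on X h ->
  0 < mubar -> smoothing_function X h ht ght mubar kappa L ->
  (* optimal solution *)
  is_argmin X (fun w => f w + h w) xstar ->
  (* parameters of AdaSMSAG *)
  (1 <= N)%N -> 0 < c -> 0 < mu0 <= mubar ->
  (forall j, (1 <= j <= N)%N ->
     [/\ (1 <= m j)%N, 0 < alpha j < 1, 0 < beta j & 0 < theta j]) ->
  (forall j i, (1 <= j <= N)%N -> (i < m j)%N -> Xi (xi j i)) ->
  (* iterates *)
  z 0%N = y 0%N -> X (y 0%N) ->
  (let mu := fun j : nat => c * mu0 / (j%:R + c) in
   let G := fun j : nat =>
     (m j)%:R^-1 *: \sum_(i < m j) oracle (mu j) (x j) (xi j i) in
   (forall j, (1 <= j <= N)%N ->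
     [/\ x j = alpha j *: z j.-1 + (1 - alpha j) *: y j.-1,
         is_argmin X (fun w => dot (G j) (w - x j)
                               + beta j / 2 * enorm (w - x j) ^+ 2) (y j) &
         is_argmin X (fun w => dot (G j) (w - x j)
                               + theta j / 2 * enorm (w - z j.-1) ^+ 2) (z j)]) ->
   let psit := fun (mu' : R) (w : 'rV[R]_n) => f w + ht mu' w in
   let gpsit := fun (mu' : R) (w : 'rV[R]_n) => gf w + ght mu' w in
   let delta := fun j : nat => G j - gpsit (mu j) (x j) in
   let D2 := fun j : nat => enorm (xstar - z j) ^+ 2 / 2 in
   let Delta := fun j : nat => psit (mu j) (y j) - psit (mu j) xstar in
   let Gamma := fun j : nat =>
     Delta j - (1 - alpha j) * Delta j.-1
     - 2 * kappa * (1 - alpha j) * (mu j.-1 - mu j) in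
   let Lk := Lf + L / mu k in
   (* the lemma, for a given k *)
   (1 <= k <= N)%N ->
   alpha k * beta k - theta k <= 0 ->
   0 < beta k - Lk ->
   Gamma k <= alpha k * theta k * (D2 k.-1 - D2 k)
              + enorm (delta k) ^+ 2 / (2 * (beta k - Lk))
              + alpha k * dot (delta k) (xstar - z k.-1)).
Proof.
move=> _ convX _ convf gradf lipf Lf_ge0 _ _ sm [Xxs _] _ c_gt0 /andP[mu0_gt0 mu0_le]
  params _ z0 Xy0 mu G iter psit gpsit delta D2 Delta Gamma Lk k_bd ab_le b_gt_Lk.
have [smooth [_ [_ [_ [L_gt0 lipht]]]]] := sm.
have [_ /andP[a_gt0 a_lt1] _ _] := params k k_bd.
have [x_def y_opt z_opt] := iter k k_bd.
have [Xy1 Xz1] : X (y k.-1) /\ X (z k.-1).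
  case: (k.-1) (leq_trans (leq_pred k) (andP k_bd).2) => [|j] jN; first by rewrite z0.
  by have [_ [Xy _] [Xz _]] := iter j.+1 jN.
have mu_in j : 0 < mu j <= mubar.
  by rewrite smoothing_param_gt0 ?(le_trans (smoothing_param_le _ _ _)).
have mu_le : 0 < mu k <= mu k.-1.
  by rewrite smoothing_param_gt0 ?smoothing_param_nonincr ?leq_pred.
have [gradh [_ convh]] := smooth _ (mu_in k).
have Lk_ge0 : 0 <= Lk.
  by have /andP[muk_gt0 _] := mu_in k; rewrite addr_ge0 // divr_ge0 // ltW.
have step : psit (mu k) (y k) <= alpha k * psit (mu k) xstar + (1 - alpha k) * psit (mu k) (y k.-1)
    + alpha k * theta k * (D2 k.-1 - D2 k) + enorm (delta k) ^+ 2 / (2 * (beta k - Lk))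
    + alpha k * dot (delta k) (xstar - z k.-1).
  apply: (accelerated_step_le convX (convex_funD convf convh)
    (fun w Xw => is_gradient_atD (gradf w Xw) (gradh w Xw))
    (lipschitz_onD lipf (lipht _ (mu_in k))) Lk_ge0 _ _ _ Xy1 Xz1 Xxs x_def y_opt z_opt).
  - by rewrite a_gt0 ltW.
  - by rewrite -subr_le0.
  - by rewrite -subr_gt0.
have a_le1 : 0 <= 1 - alpha k by rewrite subr_ge0 ltW.
have := smoothing_drift_le sm Xy1 Xxs mu_le (andP (mu_in k.-1)).2.
move=> /(ler_wpM2l a_le1) drift.
by rewrite /Gamma /Delta /psit in step *; lra.
Qed.
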